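(* Let $\mathcal J$ be an arbitrary index set and, for each $j\in\mathcal J$, let $\rho_{j,k,l},\eta_{j,k,l}\in K[X]$ be polynomials indexed by finitely many $k$ and, for each $k$, finitely many $l$. If the $L_\theta$-theory $$T_\theta\cup\Big\{\sum_k\bigcap_l\mathrm{Ker}(\rho_{j,k,l})=\sum_k\bigcap_l\mathrm{Ker}(\eta_{j,k,l}):j\in\mathcal J\Big\}$$ is consistent, then it is equivalent to a theory of one of the following forms: (1) $T_\theta\cup\{\mathrm{Ker}(\rho)=\mathbb V\}$, where $\rho\in K[X]$ is monic with $\rho\neq1$; (2) $T_\theta\cup\{\mathrm{Ker}(f^{n_f})=\mathrm{Ker}(f^{n_f+1}):f\in Q\}$, where $Q$ is a (possibly infinite) set of monic irreducible polynomials in $K[X]$ and $n_f\in\mathbb N$ for each $f\in Q$.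
   Context: Setting: $L$ is a first-order language, $T$ a model-complete $L$-theory and $K$ a field. There are $L$-formulas without parameters which define, in every model $\mathcal M\models T$, a nontrivial $K$-vector space $\mathbb V=\mathbb V^{\mathcal M}$ (the paper also assumes $\mathbb V$ infinite in every model); elements of $\mathbb V$ are treated as single elements. $L_\theta=L\cup\{\theta\}$, $\theta$ a new unary function symbol; $T_\theta$ is $T$ plus axioms saying $\theta|_{\mathbb V}$ is a $K$-linear endomorphism of $\mathbb V$ and $\theta(x)=0$ for $x\notin\mathbb V$. For $\rho=\sum_i(\rho)_iX^i\in K[X]$, $\rho[\theta]:=\sum_i(\rho)_i\theta^i$ and $\mathrm{Ker}(\rho)$ denotes the definable subspace $\{v\in\mathbb V:\rho[\theta](v)=0\}$. An equation between sums of intersections of such kernels is the first-order sentence asserting equality of the corresponding definable subsets of $\mathbb V$. Two theories are equivalent if they have the same models. *)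

From HB Require Import structures.
From mathcomp Require Import all_boot all_order all_algebra.
Set Implicit Arguments. Unset Strict Implicit. Unset Printing Implicit Defensive.
Import Order.TTheory GRing.Theory Num.Theory.
Local Open Scope ring_scope.

(* A model of T_theta is a pair (i, th)
   where i ranges over (an index type for) the models M of T, [V i] is the
   K-vector space V^M defined in M, and th : V i -> V i is a K-linear
   endomorphism (the interpretation of theta on V; theta is 0 outside V, so
   it carries no further information). *)

Section PolyEnd.
Variables (K : fieldType) (V : lmodType K).

Definition polyend (rho : {poly K}) (th : V -> V) (v : V) : V :=
  \sum_(i < size rho) rho`_i *: iter i th v.

Definition Ker (th : V -> V) (rho : {poly K}) : V -> Prop :=
  fun v => polyend rho th v = 0.

Definition sumcap (th : V -> V) (n : nat) (m : 'I_n -> nat)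
  (P : forall k : 'I_n, 'I_(m k) -> {poly K}) : V -> Prop :=
  fun v => exists w : 'I_n -> V,
    (forall (k : 'I_n) (l : 'I_(m k)), Ker th (P k l) (w k)) /\
    v = \sum_(k < n) w k.

Definition kereq (th : V -> V) (n : nat) (m : 'I_n -> nat)
  (rho eta : forall k : 'I_n, 'I_(m k) -> {poly K}) : Prop :=
  forall v, sumcap th rho v <-> sumcap th eta v.

End PolyEnd.

From HB Require Import structures.
From mathcomp Require Import all_boot all_order all_algebra.
From Stdlib Require Import Classical ClassicalEpsilon.
Set Implicit Arguments. Unset Strict Implicit. Unset Printing Implicit Defensive.
Import GRing.Theory.
Local Open Scope ring_scope.

(* In every K[X]-module, Ker a ∩ Ker b = Ker (gcd a b) and Ker a + Ker b =
   Ker (lcm a b), so each axiom reads Ker a = Ker b, i.e. Ker a ⊆ Ker g and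
   Ker b ⊆ Ker g for g = gcd a b.  For g | x, the inclusion Ker x ⊆ Ker g says
   V = Ker g if x = 0, and otherwise Ker p^(e+1) = Ker p^e for each irreducible
   p dividing x/g, e being the multiplicity of p in g.
   If some condition V = Ker h with h <> 0 occurs, write h = p^n q with p ∤ q:
   modulo it, Ker p^(e+1) = Ker p^e becomes V = Ker (p^(min e n) q).  All
   conditions are then of the form V = Ker h and together amount to V = Ker r
   for r the monic generator of the ideal of those h; consistency and V <> 0
   give r <> 1.  Otherwise only stabilisation conditions remain, and for each
   monic irreducible f the one with the least exponent implies the others. *)

Section PolyFacts.
Variable K : fieldType.
Implicit Types (a b d g p q : {poly K}).

(* An lcm of [a] and [b] up to a unit; it vanishes as soon as [a] or [b] does,
   in line with [Ker 0 = V]. *)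
Definition lcmp a b : {poly K} := a %/ gcdp a b * b.

Lemma poly_size_ind (P : {poly K} -> Prop) :
  (forall p, (forall q, (size q < size p)%N -> P q) -> P p) -> forall p, P p.
Proof.
move=> IH p; move: {2}(size p).+1 (ltnSn (size p)) => n.
elim: n p => // n IHn p lt_p_n; apply: IH => q lt_q_p.
exact: IHn (leq_trans lt_q_p lt_p_n).
Qed.

Lemma size_divp_irredp p g :
  irreducible_poly p -> g != 0 -> (size (g %/ p)%R < size g)%N.
Proof.
move=> p_irr g0; rewrite size_divp ?irredp_neq0 // ltn_subrL size_poly_gt0 g0.
by rewrite andbT ltn_predRL; case: p_irr.
Qed.

Lemma exists_irredp_dvdp p :
  (1 < size p)%N -> exists2 q, irreducible_poly q & q %| p.
Proof.
elim/poly_size_ind: p => p IH p_gt1; have p0 : p != 0 by rewrite -size_poly_gt0 ltnW.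
have [[q [q_gt1 q_p lt_q_p]] | p_min] :=
  classic (exists q, [/\ (1 < size q)%N, q %| p & (size q < size p)%N]).
  have [r r_irr r_q] := IH q lt_q_p q_gt1.
  by exists r; last exact: dvdp_trans r_q q_p.
exists p => //; split=> // q q_n1 q_p.
have q0 : q != 0 by apply: contraTneq q_p => ->; rewrite dvd0p.
rewrite -dvdp_size_eqp // eqn_leq dvdp_leq // leqNgt; apply/negP => lt_q_p.
by apply: p_min; exists q; rewrite ltn_neqAle eq_sym q_n1 size_poly_gt0 q0.
Qed.

Lemma irredp_power_decomp p g : irreducible_poly p -> g != 0 ->
  exists e, exists2 g1, g = p ^+ e * g1 & ~~ (p %| g1).
Proof.
move=> p_irr; elim/poly_size_ind: g => g IH g0.
have [p_g | p_ng] := boolP (p %| g); last by exists 0%N, g; rewrite ?expr0 ?mul1r.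
have gE := divpK p_g.
have g'0 : g %/ p != 0 by apply: contraNneq g0 => g'0; rewrite -gE g'0 mul0r eqxx.
have [e [g1 g'E p_ng1]] := IH _ (size_divp_irredp p_irr g0) g'0.
by exists e.+1, g1; rewrite // -gE g'E exprSr mulrAC.
Qed.

Lemma gcdp_closed_dvdp_least (P : {poly K} -> Prop) :
    (forall a b, P a -> P b -> P (gcdp a b)) ->
  forall d, P d -> d != 0 -> exists2 r, P r & forall h, P h -> r %| h.
Proof.
move=> P_gcd; elim/poly_size_ind => d IH Pd d0.
have [[h Ph d_nh] | d_min] := classic (exists2 h, P h & ~~ (d %| h)); last first.
  by exists d => // h Ph; have [//|d_nh] := boolP (d %| h); case: d_min; exists h.
have lt_g_d : (size (gcdp d h) < size d)%N.
  rewrite ltn_neqAle dvdp_size_eqp ?dvdp_gcdl // dvdp_leq ?dvdp_gcdl // andbT.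
  by apply: contra d_nh => /eqp_dvdl <-; rewrite dvdp_gcdr.
by apply: IH lt_g_d (P_gcd _ _ Pd Ph) _; rewrite gcdp_eq0 negb_and d0.
Qed.

Lemma eqp_monic_exists p : p != 0 -> exists2 q, q \is monic & p %= q.
Proof.
move=> p0; have lp0 : lead_coef p != 0 by rewrite lead_coef_eq0.
exists ((lead_coef p)^-1 *: p); first by rewrite monicE lead_coefZ mulVf.
by rewrite eqp_sym eqp_scale ?invr_eq0.
Qed.

Lemma eqp_irredp p q : p %= q -> irreducible_poly p -> irreducible_poly q.
Proof.
move=> pq [p_gt1 p_irr]; split; first by rewrite -(eqp_size pq).
move=> d d_n1 d_q; have d_p : d %| p by rewrite (eqp_dvdr _ pq).
exact: eqp_trans (p_irr d d_n1 d_p) pq.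
Qed.

Definition stab_condition g x p (e : nat) : Prop :=
  [/\ x != 0, irreducible_poly p, p %| x %/ g & exists2 g1, g = p ^+ e * g1 & ~~ (p %| g1)].

Definition sumcap_poly n (m : 'I_n -> nat) (P : forall k, 'I_(m k) -> {poly K}) :=
  \big[lcmp/1]_(k < n) \big[@gcdp _/0]_(l < m k) P k l.

End PolyFacts.

Section PolyEnd.
Variables (K : fieldType) (V : lmodType K) (th : {linear V -> V}).
Implicit Types (a b c p q : {poly K}) (v : V).
Local Notation ev p := (polyend p (fun x => th x)).

Lemma iter_linear i : linear (iter i (fun x => th x)).
Proof. by elim: i => [|i IH] a u w //=; rewrite IH linearP. Qed.

HB.instance Definition _ i :=
  GRing.isLinear.Build K V V *:%R (iter i (fun x => th x)) (iter_linear i).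

Lemma polyend_linear p : linear (ev p).
Proof.
move=> a u w; rewrite /polyend scaler_sumr -big_split; apply: eq_bigr => i _ /=.
by rewrite linearP scalerDr !scalerA mulrC.
Qed.

HB.instance Definition _ p :=
  GRing.isLinear.Build K V V *:%R (ev p) (polyend_linear p).

Lemma polyend_widen p n v : (size p <= n)%N ->
  ev p v = \sum_(i < n) p`_i *: iter i (fun x => th x) v.
Proof.
move=> le_p_n; rewrite /polyend.
rewrite (big_ord_widen n (fun i => p`_i *: iter i (fun x => th x) v) le_p_n).
rewrite big_mkcond; apply: eq_bigr => i _; case: ltnP => // le_p_i.
by rewrite nth_default // scale0r.
Qed.

Lemma polyend0 v : ev 0 v = 0.
Proof. by rewrite /polyend size_poly0 big_ord0. Qed.

Lemma polyendD p q v : ev (p + q) v = ev p v + ev q v.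
Proof.
rewrite !(@polyend_widen _ (maxn (size p) (size q))) ?leq_maxl ?leq_maxr //;
  last exact: size_polyD.
by rewrite -big_split; apply: eq_bigr => i _; rewrite coefD scalerDl.
Qed.

Lemma polyendZ (k : K) p v : ev (k *: p) v = k *: ev p v.
Proof.
rewrite !(@polyend_widen _ (size p)) ?size_scale_leq // scaler_sumr.
by apply: eq_bigr => i _; rewrite coefZ scalerA.
Qed.

Lemma polyendC (k : K) v : ev k%:P v = k *: v.
Proof. by rewrite (@polyend_widen _ 1) ?size_polyC_leq1 // big_ord1 coefC. Qed.

Lemma polyend1 v : ev 1 v = v.
Proof. by rewrite polyendC scale1r. Qed.

Lemma polyend_th p v : th (ev p v) = ev p (th v).
Proof.
rewrite /polyend linear_sum; apply: eq_bigr => i _.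
by rewrite linearZ /= -iterS iterSr.
Qed.

Lemma polyendMX p v : ev (p * 'X) v = ev p (th v).
Proof.
rewrite (@polyend_widen _ (size p).+1); last first.
  by rewrite (leq_trans (size_polyMleq _ _)) // size_polyX addn2.
rewrite big_ord_recl coefMX /= scale0r add0r /polyend.
by apply: eq_bigr => i _; rewrite coefMX /= -iterSr.
Qed.

Lemma polyendM p q v : ev (p * q) v = ev p (ev q v).
Proof.
elim/poly_ind: p v => [|p c IH] v; first by rewrite mul0r !polyend0.
by rewrite mulrDl mulrAC !polyendD !polyendMX IH mul_polyC polyendZ polyendC polyend_th.
Qed.

Local Notation ker p := (Ker (fun x => th x) p).

Lemma Ker_dvdp p q v : p %| q -> ker p v -> ker q v.
Proof. by move=> /divpK <-; rewrite /Ker polyendM => ->; rewrite linear0. Qed.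

Lemma Ker_eqp p q v : p %= q -> ker p v <-> ker q v.
Proof. by move=> /andP[pq qp]; split; apply: Ker_dvdp. Qed.

Lemma Ker_gcdp a b v : ker (gcdp a b) v <-> ker a v /\ ker b v.
Proof.
split=> [g_v | [a_v b_v]].
  by split; apply: Ker_dvdp g_v; rewrite ?dvdp_gcdl ?dvdp_gcdr.
have [u /andP[u_g _]] := Bezoutp a b.
by apply: Ker_dvdp u_g _; rewrite /Ker polyendD !polyendM a_v b_v !linear0 addr0.
Qed.

Lemma Ker_coprime_mul a b c v :
  coprimep a b -> ker (a * c) v -> ker (b * c) v -> ker c v.
Proof.
move=> /Bezout_eq1_coprimepP[[u1 u2] /= u_1]; rewrite /Ker => ac_v bc_v.
rewrite -[c]mul1r -u_1 mulrDl -!mulrA polyendD !(polyendM _ (_ * c)) ac_v bc_v.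
by rewrite !linear0 addr0.
Qed.

Lemma Ker_lcmp a b v :
  ker (lcmp a b) v <-> exists x y, [/\ ker a x, ker b y & v = x + y].
Proof.
rewrite /lcmp; set g := gcdp a b.
have lcmE : a %/ g * b = a * (b %/ g).
  rewrite -[in LHS](divpK (dvdp_gcdr a b)) -[in RHS](divpK (dvdp_gcdl a b)).
  by rewrite mulrA mulrAC.
split=> [l_v | [x [y [a_x b_y ->]]]]; last first.
  rewrite /Ker linearD /= (Ker_dvdp (dvdp_mull _ (dvdpp b)) b_y) addr0.
  by apply: Ker_dvdp a_x; rewrite lcmE dvdp_mulr.
have [-> | a0] := eqVneq a 0.
  by exists v, 0; rewrite addr0 /Ker polyend0 linear0.
have /Bezout_eq1_coprimepP[[u1 u2] /= u_1] : coprimep (a %/ g) (b %/ g).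
  by rewrite coprimep_div_gcd ?a0.
exists (ev (u2 * (b %/ g)) v), (ev (u1 * (a %/ g)) v); split.
- by rewrite /Ker -polyendM mulrCA -lcmE polyendM l_v linear0.
- by rewrite /Ker -polyendM mulrCA [b * _]mulrC polyendM l_v linear0.
- by rewrite -polyendD addrC u_1 polyend1.
Qed.

Lemma Ker_big_gcdp m (P : 'I_m -> {poly K}) v :
  ker (\big[@gcdp _/0]_(l < m) P l) v <-> forall l, ker (P l) v.
Proof.
elim: m P => [|m IH] P; first by rewrite big_ord0 /Ker polyend0; split=> // _ [].
rewrite big_ord_recl Ker_gcdp IH; split=> [[P0 Plift] l | Pl]; last by split.
by case: (unliftP ord0 l) => [j ->|->].
Qed.

Lemma Ker_big_lcmp n (g : 'I_n -> {poly K}) v :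
  ker (\big[@lcmp _/1]_(k < n) g k) v <->
  exists w : 'I_n -> V, (forall k, ker (g k) (w k)) /\ v = \sum_(k < n) w k.
Proof.
elim: n g v => [|n IH] g v.
  rewrite big_ord0 /Ker polyend1; split=> [->|[w [_ ->]]]; last by rewrite big_ord0.
  by exists (fun=> 0); split=> [[]|]; rewrite ?big_ord0.
rewrite big_ord_recl Ker_lcmp.
split=> [[x [y [x_ker /IH[w [w_ker ->]] ->]]] | [w [w_ker ->]]].
  exists (fun k => if unlift ord0 k is Some j then w j else x); split.
    by move=> k; case: unliftP => [j ->|->].
  by rewrite big_ord_recl unlift_none; congr (_ + _); apply: eq_bigr => j _; rewrite liftK.
exists (w ord0), (\sum_(j < n) w (lift ord0 j)); split; rewrite ?big_ord_recl //.
by apply/IH; exists (fun j => w (lift ord0 j)).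
Qed.

Lemma sumcapE n (m : 'I_n -> nat) (P : forall k, 'I_(m k) -> {poly K}) v :
  sumcap (fun x => th x) P v <-> ker (sumcap_poly P) v.
Proof.
rewrite Ker_big_lcmp; split=> -[w [w_ker ->]]; exists w; split=> // k;
  exact/Ker_big_gcdp.
Qed.

Lemma kereqE n (m : 'I_n -> nat) (P R : forall k, 'I_(m k) -> {poly K}) :
  kereq (fun x => th x) P R <-> forall v, ker (sumcap_poly P) v <-> ker (sumcap_poly R) v.
Proof.
by split=> PR v; split=> /sumcapE /PR /sumcapE.
Qed.

Definition annihilates p := forall v, ker p v.

Definition stable p e := forall v, ker (p ^+ e.+1) v -> ker (p ^+ e) v.

Lemma stableP p e : stable p e <-> forall v, ker (p ^+ e) v <-> ker (p ^+ e.+1) v.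
Proof.
split=> [p_st v | p_eq v /p_eq //]; split; last exact: p_st.
by apply: Ker_dvdp; rewrite dvdp_exp2l.
Qed.

Lemma stable_eqp p q e : p %= q -> stable p e -> stable q e.
Proof.
move=> pq p_st v qv; apply/(Ker_eqp _ (eqp_exp e pq)); apply: p_st.
by apply/(Ker_eqp _ (eqp_exp e.+1 pq)).
Qed.

Lemma stable_KerX p e k v : stable p e -> (e <= k)%N -> ker (p ^+ k) v -> ker (p ^+ e) v.
Proof.
move=> p_st /subnK <-; elim: (k - e)%N v => // d IH v.
rewrite /Ker addSnnS addnC exprD polyendM => /p_st.
by rewrite /Ker -polyendM -exprD addnC; apply: IH.
Qed.

Lemma stable_le p e e' : stable p e -> (e <= e')%N -> stable p e'.
Proof.
move=> p_st le_e v /(stable_KerX p_st (leqW le_e)).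
by apply: Ker_dvdp; rewrite dvdp_exp2l.
Qed.

Lemma stable_cofactor p e g1 : irreducible_poly p -> ~~ (p %| g1) ->
  (forall v, ker (p ^+ e * g1 * p) v -> ker (p ^+ e * g1) v) <-> stable p e.
Proof.
move=> p_irr p_ng1; split=> [sub v pv | p_st v].
  have g_v : ker (p ^+ e * g1) v.
    by apply: sub; rewrite /Ker mulrAC -exprSr mulrC polyendM pv linear0.
  have p_g1 : coprimep p g1 by rewrite irreducible_poly_coprime.
  apply: (Ker_coprime_mul p_g1); first by rewrite -exprS.
  by rewrite mulrC.
by rewrite /Ker mulrAC -exprSr !polyendM => /p_st.
Qed.

Lemma Ker_mul_sub_irredp g c : c != 0 ->
    (forall p, irreducible_poly p -> p %| c -> forall v, ker (g * p) v -> ker g v) ->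
  forall v, ker (g * c) v -> ker g v.
Proof.
elim/poly_size_ind: c => c IH c0 c_sub v.
have [c_le1 | c_gt1] := leqP (size c) 1.
  have /size_poly1P[k k0 ->] : size c == 1%N by rewrite eqn_leq c_le1 size_poly_gt0.
  rewrite /Ker mulrC polyendM polyendC => /eqP.
  by rewrite scaler_eq0 (negPf k0) => /eqP.
have [p p_irr p_c] := exists_irredp_dvdp c_gt1.
have c'0 : c %/ p != 0.
  by apply: contraNneq c0 => c'0; rewrite -(divpK p_c) c'0 mul0r eqxx.
rewrite -(divpK p_c) mulrA /Ker mulrAC polyendM => /(c_sub p p_irr p_c).
rewrite /Ker -polyendM; apply: IH (size_divp_irredp p_irr c0) c'0 _ v.
move=> q q_irr q_c'; apply: c_sub q_irr _.
exact: dvdp_trans q_c' (divp_dvd p_c).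
Qed.

Lemma Ker_sub_dvdp g x : g %| x ->
  (forall v, ker x v -> ker g v) <->
  (x = 0 -> annihilates g) /\ (forall p e, stab_condition g x p e -> stable p e).
Proof.
move=> g_x; have [-> | x0] := eqVneq x 0.
  split=> [sub | [ann _] v _]; last exact: ann.
  split=> [_ v | p e []]; last by rewrite eqxx.
  by apply: sub; rewrite /Ker polyend0.
have g0 : g != 0 by apply: contraTneq g_x => ->; rewrite dvd0p.
have c0 : x %/ g != 0 by apply: contraNneq x0 => c0; rewrite -(divpKC g_x) c0 mulr0.
split=> [sub | [_ st] v].
  split=> [x00 | p e [_ p_irr p_c [g1 gE p_ng1]]]; first by rewrite x00 eqxx in x0.
  apply/(stable_cofactor e p_irr p_ng1); rewrite -gE => v gp_v; apply: sub.
  by apply: Ker_dvdp gp_v; rewrite -(divpKC g_x) dvdp_mul2l.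
rewrite -{1}(divpKC g_x); apply: Ker_mul_sub_irredp c0 _ v => p p_irr p_c.
have [e [g1 gE p_ng1]] := irredp_power_decomp p_irr g0.
rewrite gE; apply/(stable_cofactor e p_irr p_ng1); apply: st.
by split=> //; exists g1.
Qed.

Lemma Ker_eq_conditions a b :
  (forall v, ker a v <-> ker b v) <->
  (a = 0 \/ b = 0 -> annihilates (gcdp a b)) /\
  (forall p e, stab_condition (gcdp a b) a p e \/ stab_condition (gcdp a b) b p e ->
     stable p e).
Proof.
have Ker_eq_sub : (forall v, ker a v <-> ker b v) <->
    (forall v, ker a v -> ker (gcdp a b) v) /\ (forall v, ker b v -> ker (gcdp a b) v).
  split=> [ab | [ag bg] v].
    by split=> v xv; apply/Ker_gcdp; split=> //; apply/ab.
  by split=> [/ag | /bg] /Ker_gcdp[].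
apply: iff_trans Ker_eq_sub _; rewrite /iff.
split=> [[/(Ker_sub_dvdp (dvdp_gcdl a b))[a0 sa] /(Ker_sub_dvdp (dvdp_gcdr a b))[b0 sb]]
        | [ann st]].
  by split=> [[/a0 | /b0] | p e [/sa | /sb]].
split; [apply/(Ker_sub_dvdp (dvdp_gcdl a b)) | apply/(Ker_sub_dvdp (dvdp_gcdr a b))].
  by split=> [x0 | p e pe]; [apply: ann | apply: st]; left.
by split=> [x0 | p e pe]; [apply: ann | apply: st]; right.
Qed.

Lemma stable_annihilates p q e n : irreducible_poly p -> ~~ (p %| q) ->
  annihilates (p ^+ n * q) -> stable p e <-> annihilates (p ^+ minn e n * q).
Proof.
move=> p_irr p_nq ann; split=> [p_st v | ann_min v pv].
  have [_ | lt_en] := leqP n e; first exact: ann.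
  rewrite /Ker polyendM; apply: (stable_KerX p_st (ltnW lt_en)).
  by rewrite /Ker -polyendM; apply: ann.
apply: Ker_dvdp (dvdp_exp2l p (geq_minl e n)) _.
have p_q : coprimep p q by rewrite irreducible_poly_coprime.
apply: (Ker_coprime_mul (coprimep_expl (e.+1 - minn e n) p_q)).
  by rewrite -exprD subnK // leqW // geq_minl.
by rewrite mulrC; apply: ann_min.
Qed.

End PolyEnd.

Section Conditions.
Variables (K : fieldType) (J : Type) (a b : J -> {poly K}).

Definition ann_conditions h := exists2 j, a j = 0 \/ b j = 0 & h = gcdp (a j) (b j).

Definition stab_conditions p e := exists j,
  stab_condition (gcdp (a j) (b j)) (a j) p e \/
  stab_condition (gcdp (a j) (b j)) (b j) p e.

Lemma stab_conditions_irredp p e : stab_conditions p e -> irreducible_poly p.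
Proof. by case=> j [[] | []]. Qed.

Lemma Ker_eqs_conditions (W : lmodType K) (t : {linear W -> W}) :
  (forall j v, Ker (fun x => t x) (a j) v <-> Ker (fun x => t x) (b j) v) <->
  (forall h, ann_conditions h -> annihilates t h) /\
  (forall p e, stab_conditions p e -> stable t p e).
Proof.
split=> [eqs | [annH st] j]; last first.
  apply/Ker_eq_conditions.
  by split=> [ab0 | p e pe]; [apply: annH | apply: st]; exists j.
split=> [h [j ab0 ->] | p e [j pe]].
  exact: (proj1 (proj1 (Ker_eq_conditions t _ _) (eqs j)) ab0).
exact: (proj2 (proj1 (Ker_eq_conditions t _ _) (eqs j)) p e pe).
Qed.

End Conditions.

Lemma least_choice (A : Type) (P : A -> nat -> Prop) :
  exists m : A -> nat, forall a n, P a n -> P a (m a) /\ (m a <= n)%N.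
Proof.
apply: (choice (fun a m => forall n, P a n -> P a m /\ (m <= n)%N)) => a.
have [[n Pn] | noP] := classic (exists n, P a n); last first.
  by exists 0%N => n Pn; case: noP; exists n.
pose b k := if excluded_middle_informative (P a k) then true else false.
have bP k : b k <-> P a k by rewrite /b; case: excluded_middle_informative.
have [m /bP Pm m_min] := ex_minnP (ex_intro b n (proj2 (bP n) Pn)).
by exists m => k /bP /m_min.
Qed.

Section Generators.
Variable K : fieldType.

Lemma annihilates_generator (H : {poly K} -> Prop) :
  (exists2 h, H h & h != 0) ->
  exists2 r, r \is monic & forall (W : lmodType K) (t : {linear W -> W}),
    (forall h, H h -> annihilates t h) <-> annihilates t r.
Proof.
move=> [h0 Hh0 h00].
pose P d := forall (W : lmodType K) (t : {linear W -> W}),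
  (forall h, H h -> annihilates t h) -> annihilates t d.
have P_gcd a b : P a -> P b -> P (gcdp a b).
  by move=> Pa Pb W t annH v; apply/Ker_gcdp; split; [apply: Pa | apply: Pb].
have P_H h : H h -> P h by move=> Hh W t; apply.
have [d Pd d_min] := gcdp_closed_dvdp_least P_gcd (P_H _ Hh0) h00.
have d0 : d != 0 by apply: contraTneq (d_min _ (P_H _ Hh0)) => ->; rewrite dvd0p.
have [r r_monic dr] := eqp_monic_exists d0.
exists r => // W t; split=> [annH v | ann_r h Hh v].
  by apply/(Ker_eqp t _ dr); apply: Pd.
apply: (Ker_dvdp _ (ann_r v)); rewrite -(eqp_dvdl _ dr).
by apply: d_min; apply: P_H.
Qed.

Lemma annihilates_stable_generator (H : {poly K} -> Prop) (S : {poly K} -> nat -> Prop) :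
  (forall p e, S p e -> irreducible_poly p) -> (exists2 h, H h & h != 0) ->
  exists2 r, r \is monic & forall (W : lmodType K) (t : {linear W -> W}),
    (forall h, H h -> annihilates t h) /\ (forall p e, S p e -> stable t p e) <->
    annihilates t r.
Proof.
move=> S_irr [h0 Hh0 h00].
pose H' h := H h \/ exists p e n q,
  [/\ S p e, h0 = p ^+ n * q, ~~ (p %| q) & h = p ^+ minn e n * q].
have [r r_monic rE] := annihilates_generator (ex_intro2 H' _ h0 (or_introl Hh0) h00).
exists r => // W t; apply: iff_trans (rE W t); split=> [[annH st] h | annH'].
  case=> [/annH // | [p [e [n [q [Se h0E p_nq ->]]]]]].
  have ann_h0 : annihilates t (p ^+ n * q) by rewrite -h0E; apply: annH.
  exact/(stable_annihilates e (S_irr _ _ Se) p_nq ann_h0)/st.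
split=> [h Hh | p e Se]; first by apply: annH'; left.
have p_irr := S_irr _ _ Se.
have [n [q h0E p_nq]] := irredp_power_decomp p_irr h00.
have ann_h0 : annihilates t (p ^+ n * q) by rewrite -h0E; apply: annH'; left.
apply/(stable_annihilates e p_irr p_nq ann_h0); apply: annH'; right.
by exists p, e, n, q.
Qed.

Lemma stable_normal_form (S : {poly K} -> nat -> Prop) :
  (forall p e, S p e -> irreducible_poly p) ->
  exists (Q : {poly K} -> Prop) (nf : {poly K} -> nat),
    (forall f, Q f -> f \is monic /\ irreducible_poly f) /\
    forall (W : lmodType K) (t : {linear W -> W}),
      (forall p e, S p e -> stable t p e) <-> (forall f, Q f -> stable t f (nf f)).
Proof.
move=> S_irr; pose P f n := exists2 p, S p n & p %= f.
have [nf nfP] := least_choice P.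
exists (fun f => f \is monic /\ exists n, P f n), nf; split.
  by move=> f [f_monic [n [p Sp pf]]]; split; last exact: eqp_irredp pf (S_irr _ _ Sp).
move=> W t; split=> [st f [_ [n /nfP[[p Sp pf] _]]] | st p e Sp].
  exact: stable_eqp pf (st _ _ Sp).
have [f f_monic pf] := eqp_monic_exists (irredp_neq0 (S_irr _ _ Sp)).
have Pfe : P f e by exists p.
have [_ nf_le] := nfP _ _ Pfe.
apply: (@stable_eqp _ _ _ f); first by rewrite eqp_sym.
exact: stable_le (st f (conj f_monic (ex_intro _ e Pfe))) nf_le.
Qed.

End Generators.

Theorem lemma2p8
  (K : fieldType)
  (Mod : Type) (V : Mod -> lmodType K)
  (V_nontriv : forall M : Mod, exists v : V M, v != 0)
  (V_infinite : forall M : Mod, ~ exists s : seq (V M), forall v : V M, v \in s)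
  (J : Type) (nk : J -> nat) (nl : forall j : J, 'I_(nk j) -> nat)
  (rho eta : forall (j : J) (k : 'I_(nk j)), 'I_(nl j k) -> {poly K}) :
  let Sat := fun (M : Mod) (th : {linear V M -> V M}) =>
    forall j : J, kereq (fun x => th x) (rho j) (eta j) in
  (exists (M : Mod) (th : {linear V M -> V M}), Sat M th) ->
  (exists r : {poly K},
     [/\ r \is monic, r != 1 &
       forall (M : Mod) (th : {linear V M -> V M}),
         Sat M th <-> (forall v : V M, Ker (fun x => th x) r v)])
  \/
  (exists (Q : {poly K} -> Prop) (nf : {poly K} -> nat),
     (forall f, Q f -> f \is monic /\ irreducible_poly f) /\
     forall (M : Mod) (th : {linear V M -> V M}),
       Sat M th <->
       (forall f, Q f -> forall v : V M,
          Ker (fun x => th x) (f ^+ nf f) v <-> Ker (fun x => th x) (f ^+ (nf f).+1) v)).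
Proof.
move=> Sat [M0 [th0 Sat0]].
pose a j := sumcap_poly (rho j); pose b j := sumcap_poly (eta j).
have SatE M th : Sat M th <->
    (forall h, ann_conditions a b h -> annihilates th h) /\
    (forall p e, stab_conditions a b p e -> stable th p e).
  by apply: iff_trans (Ker_eqs_conditions a b th); split=> sat j; apply/kereqE; apply: sat.
have S_irr := @stab_conditions_irredp _ _ a b.
have [[h Hh h0] | H0] := classic (exists2 h, ann_conditions a b h & h != 0).
  have [r r_monic rE] := annihilates_stable_generator S_irr (ex_intro2 _ _ h Hh h0).
  left; exists r; split=> // [|M th]; last exact: iff_trans (SatE M th) (rE _ th).
  have ann_r : annihilates th0 r := proj1 (rE _ th0) (proj1 (SatE M0 th0) Sat0).
  apply/eqP => r1; have [v /negP] := V_nontriv M0; apply.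
  by move: (ann_r v); rewrite r1 /Ker polyend1 => /eqP.
have [Q [nf [Q_irr QE]]] := stable_normal_form S_irr.
right; exists Q, nf; split=> // M th; apply: iff_trans (SatE M th) _.
have annH h : ann_conditions a b h -> annihilates th h.
  move=> Hh v; have /eqP -> : h == 0 by apply/negPn/negP => h0; apply: H0; exists h.
  by rewrite /Ker polyend0.
split=> [[_ /(QE _ th) st] f Qf | st]; first exact/stableP/st.
by split=> //; apply/(QE _ th) => f Qf; apply/stableP/st.
Qed.
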